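(* Let $\Delta$ be the $d$-simplex, i.e., the simplicial complex with vertex set $[d+1]$ containing all subsets of $[d+1]$ as faces. Then there is a sequence of elementary $2$-collapses that starts with $\Delta$ and ends with the simplicial complex whose faces are the empty set and the singletons $\{i\}$, $i \in [d+1]$ (all vertices of $\Delta$ and no faces of higher dimension).
   Context: Elementary $2$-collapse: if ${\sf K}$ is a simplicial complex and $\sigma, \tau \in {\sf K}$ satisfy (i) $\dim \sigma \leq 1$, (ii) $\tau$ is an inclusion-maximal face of ${\sf K}$, (iii) $\sigma \subseteq \tau$, and (iv) $\tau$ is the only face of ${\sf K}$ satisfying (ii) and (iii), then ${\sf K}' := {\sf K} \setminus \{\eta \in {\sf K} : \sigma \subseteq \eta \subseteq \tau\}$ arises from ${\sf K}$ by an elementary $2$-collapse. *)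

From mathcomp Require Import all_boot.
Set Implicit Arguments. Unset Strict Implicit. Unset Printing Implicit Defensive.

(* A simplicial complex on a finite vertex type T is represented by its set of
   faces, K : {set {set T}}. Dimension of a face sigma is #|sigma| - 1. *)

Definition maximal_face (T : finType) (K : {set {set T}}) (tau : {set T}) : bool :=
  (tau \in K) && [forall eta in K, ~~ (tau \proper eta)].

Definition elem_2collapse (T : finType) (K K' : {set {set T}}) : Prop :=
  exists sigma tau : {set T},
    [/\ sigma \in K /\ #|sigma| <= 2,
        maximal_face K tau,
        sigma \subset tau,
        (forall tau', maximal_face K tau' -> sigma \subset tau' -> tau' = tau) &
        K' = K :\: [set eta in K | (sigma \subset eta) && (eta \subset tau)]].

Definition collapse_seq (T : finType) (K K' : {set {set T}}) : Prop :=
  exists s : seq {set {set T}},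
    (forall i, i < size s ->
       elem_2collapse (nth K (K :: s) i) (nth K (K :: s) i.+1)) /\
    last K s = K'.

Definition simplex (T : finType) : {set {set T}} := [set: {set T}].

Definition vertices_complex (T : finType) : {set {set T}} :=
  set0 |: [set [set i] | i : T].

From mathcomp Require Import all_boot zify.
Set Implicit Arguments. Unset Strict Implicit. Unset Printing Implicit Defensive.

(* Read a complex as the independence complex of a graph R of "missing
   edges": the simplex is the independence complex of the empty graph and the
   vertices complex that of the complete graph.  Adding an edge ab to R is an
   elementary 2-collapse with sigma = {a, b}, provided the common
   non-neighbourhood N of a and b (which contains a and b) is independent: N is
   then the only maximal face containing {a, b}, and the faces removed are
   exactly those containing both a and b.  Add the edges of the complete graph
   on [d+1] in lexicographic order of (min, max).  When ab with a < b is added,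
   N consists of a and of vertices c >= b, and every pair in N is
   lexicographically after ab, hence N is still independent. *)

Definition indep_complex (T : finType) (R : rel T) : {set {set T}} :=
  [set eta : {set T} | [forall x in eta, forall y in eta, ~~ R x y]].

Definition add_edge (T : finType) (R : rel T) (a b : T) : rel T :=
  fun x y => [|| R x y, (x == a) && (y == b) | (x == b) && (y == a)].

Definition common_nonnbr (T : finType) (R : rel T) (a b : T) : {set T} :=
  [set c | ~~ R a c && ~~ R b c].

Section IndependenceComplex.

Variable T : finType.
Implicit Types (R : rel T) (eta : {set T}).

Lemma indep_complexP R eta :
  reflect (forall x y, x \in eta -> y \in eta -> ~~ R x y)
          (eta \in indep_complex R).
Proof.
rewrite inE; apply: (iffP forallP) => [H x y xe ye | H x].
  by move/implyP/(_ xe)/forallP/(_ y)/implyP: (H x); apply.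
by apply/implyP => xe; apply/forall_inP => y; apply: H.
Qed.

Lemma eq_indep_complex R R' : R =2 R' -> indep_complex R = indep_complex R'.
Proof.
by move=> eqR; apply/setP => eta; rewrite !inE; under eq_forallb do
  under eq_forallb do rewrite eqR.
Qed.

Lemma indep_complex_complete : indep_complex (fun x y : T => x != y) =
                               vertices_complex T.
Proof.
apply/setP => eta; rewrite /vertices_complex in_setU1; apply/indep_complexP/idP.
- move=> indep_eta; have [->|[x xe]] := set_0Vmem eta; first by rewrite eqxx.
  apply/orP; right; apply/imsetP; exists x => //; apply/setP => y; rewrite inE.
  by apply/idP/eqP => [ye | ->//]; apply/eqP/negbNE/indep_eta.
- case/orP => [/eqP-> x y | /imsetP[z _ ->] x y]; first by rewrite inE.
  by rewrite !inE => /eqP-> /eqP->; rewrite negbK.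
Qed.

Lemma indep_add_edge R a b eta :
  (eta \in indep_complex (add_edge R a b)) =
  (eta \in indep_complex R) && ~~ ((a \in eta) && (b \in eta)).
Proof.
apply/indep_complexP/andP => [indep_eta | [/indep_complexP indep_eta nab] x y xe ye].
  split; last first.
    by apply/andP => -[ae be]; move: (indep_eta a b ae be); rewrite /add_edge !eqxx orbT.
  apply/indep_complexP => x y xe ye.
  by move: (indep_eta x y xe ye); rewrite negb_or => /andP[].
rewrite /add_edge (negbTE (indep_eta x y xe ye)) /=; apply/norP.
by split; apply/andP => -[/eqP ex /eqP ey]; apply/negP: nab; rewrite -ex -ey xe ye.
Qed.

Lemma indep_sub_common_nonnbr R a b eta :
  eta \in indep_complex R -> a \in eta -> b \in eta -> eta \subset common_nonnbr R a b.
Proof.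
move/indep_complexP => indep_eta ae be; apply/subsetP => c ce.
by rewrite inE; apply/andP; split; apply: indep_eta.
Qed.

Variables (R : rel T) (a b : T).
Hypotheses (R_irr : irreflexive R) (R_sym : symmetric R) (nRab : ~~ R a b).
Hypothesis indep_common : common_nonnbr R a b \in indep_complex R.

Let N := common_nonnbr R a b.

Lemma pair_sub_common_nonnbr : [set a; b] \subset N.
Proof. by rewrite subUset !sub1set !inE !R_irr (R_sym b a) nRab. Qed.

Lemma pair_in_indep_complex : [set a; b] \in indep_complex R.
Proof.
apply/indep_complexP => x y xe ye; move/indep_complexP: indep_common; apply.
  exact: subsetP pair_sub_common_nonnbr x xe.
exact: subsetP pair_sub_common_nonnbr y ye.
Qed.

Lemma sub_common_nonnbr eta :
  eta \in indep_complex R -> [set a; b] \subset eta -> eta \subset N.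
Proof.
by move=> indep_eta; rewrite subUset !sub1set => /andP[]; apply: indep_sub_common_nonnbr.
Qed.

Lemma maximal_common_nonnbr : maximal_face (indep_complex R) N.
Proof.
rewrite /maximal_face indep_common; apply/forall_inP => eta indep_eta.
rewrite properE; apply/negP => /andP[subN]; apply/negP/negPn.
exact: sub_common_nonnbr indep_eta (subset_trans pair_sub_common_nonnbr subN).
Qed.

Lemma elem_2collapse_add_edge :
  elem_2collapse (indep_complex R) (indep_complex (add_edge R a b)).
Proof.
exists [set a; b], N; split.
- by rewrite pair_in_indep_complex cards2 ltnS leq_b1.
- exact: maximal_common_nonnbr.
- exact: pair_sub_common_nonnbr.
- move=> tau /andP[indep_tau /forall_inP max_tau] sub_tau.
  apply/eqP; rewrite eq_sym; apply: contraNT (max_tau N indep_common) => neq.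
  by rewrite properEneq eq_sym neq sub_common_nonnbr.
apply/setP => eta; rewrite indep_add_edge in_setD inE andbC.
have [indep_eta|_] := boolP (eta \in indep_complex R); rewrite ?andbT ?andbF //.
rewrite subUset !sub1set; congr negb.
apply/idP/idP => [/andP[ae be] | /and3P[_ -> _]] //.
by rewrite ae be indep_sub_common_nonnbr.
Qed.

End IndependenceComplex.

Lemma collapse_seq_refl (T : finType) (K : {set {set T}}) : collapse_seq K K.
Proof. by exists [::]. Qed.

Lemma collapse_seq_rcons (T : finType) (K K1 K2 : {set {set T}}) :
  collapse_seq K K1 -> elem_2collapse K1 K2 -> collapse_seq K K2.
Proof.
move=> [s [steps_s last_s]] K12; exists (rcons s K2); split; last by rewrite last_rcons.
move=> i; rewrite size_rcons ltnS leq_eqVlt -rcons_cons !nth_rcons /= ltnS.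
case/orP => [/eqP-> | lt_is]; last by rewrite ltnW // ltnS lt_is; apply: steps_s.
by rewrite leqnn ltnn eqxx -[size s]/((size (K :: s)).-1) nth_last /= last_s.
Qed.

Lemma ltn_mulD_lex n m p m' q : p < n -> q < n ->
  (m * n + p < m' * n + q) = (m < m') || (m == m') && (p < q).
Proof.
move=> ltpn ltqn; case: (ltngtP m m') => [lt_m | gt_m | ->] /=; last by rewrite ltn_add2l.
- by nia.
- by apply/negbTE; rewrite -leqNgt; nia.
Qed.

Section LexicographicEdges.

Variable n : nat.
Implicit Types x y a b c : 'I_n.

(* Orders unordered pairs lexicographically by (min, max). *)
Definition pair_key x y : nat := minn x y * n + maxn x y.

Lemma pair_keyC x y : pair_key x y = pair_key y x.
Proof. by rewrite /pair_key minnC maxnC. Qed.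

Lemma ltn_pair_key x y a b : (pair_key x y < pair_key a b) =
  (minn x y < minn a b) || (minn x y == minn a b) && (maxn x y < maxn a b).
Proof. by rewrite ltn_mulD_lex // gtn_max !ltn_ord. Qed.

Lemma pair_key_inj x y a b : pair_key x y = pair_key a b ->
  (x = a /\ y = b) \/ (x = b /\ y = a).
Proof.
move=> eq_key; have := ltn_pair_key x y a b; have := ltn_pair_key a b x y.
rewrite eq_key ltnn => /esym lt_ab /esym lt_xy.
have [eq_xa | nxa] := eqVneq (x : nat) a; [left | right]; split; apply: val_inj => /=; lia.
Qed.

Lemma pair_key_lt_sq x y : pair_key x y < n * n.
Proof. by rewrite /pair_key; have := ltn_ord x; have := ltn_ord y; nia. Qed.

Definition key_below t : rel 'I_n := fun x y => (x != y) && (pair_key x y < t).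

Lemma key_below_irr t : irreflexive (key_below t).
Proof. by move=> x; rewrite /key_below eqxx. Qed.

Lemma key_below_sym t : symmetric (key_below t).
Proof. by move=> x y; rewrite /key_below eq_sym pair_keyC. Qed.

Lemma key_belowS t x y : key_below t.+1 x y =
  key_below t x y || (x != y) && (pair_key x y == t).
Proof. by rewrite /key_below ltnS leq_eqVlt andb_orr orbC. Qed.

Lemma common_nonnbr_key_below a b c : a < b ->
  ~~ key_below (pair_key a b) a c -> c = a :> nat \/ b <= c.
Proof.
move=> lt_ab; rewrite /key_below ltn_pair_key -val_eqE /=; lia.
Qed.

Lemma indep_common_nonnbr_key_below a b : a < b ->
  common_nonnbr (key_below (pair_key a b)) a b \in
  indep_complex (key_below (pair_key a b)).
Proof.
move=> lt_ab; apply/indep_complexP => c c'; rewrite !inE => /andP[Nc _] /andP[Nc' _].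
have := common_nonnbr_key_below lt_ab Nc; have := common_nonnbr_key_below lt_ab Nc'.
by rewrite /key_below ltn_pair_key -val_eqE /=; lia.
Qed.

Lemma key_below_add_edge a b : a < b ->
  key_below (pair_key a b).+1 =2 add_edge (key_below (pair_key a b)) a b.
Proof.
move=> lt_ab x y; rewrite key_belowS /add_edge; congr (_ || _).
apply/idP/idP.
  case/andP => _ /eqP /pair_key_inj[] [-> ->]; first by rewrite !eqxx.
  by rewrite !eqxx orbT.
have neq_ab : a != b by rewrite -val_eqE /= ltn_eqF.
case/orP => /andP[/eqP-> /eqP->]; first by rewrite neq_ab eqxx.
by rewrite eq_sym neq_ab pair_keyC eqxx.
Qed.

Lemma key_belowS_eq t : (forall a b, a < b -> pair_key a b != t) ->
  key_below t.+1 =2 key_below t.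
Proof.
move=> no_key x y; rewrite key_belowS; apply/orb_idr => /andP[nxy /eqP key_xy].
have [lt_xy | gt_xy | eq_xy] := ltngtP x y.
- by move: (no_key x y lt_xy); rewrite key_xy eqxx.
- by move: (no_key y x gt_xy); rewrite pair_keyC key_xy eqxx.
- by move: nxy; rewrite -val_eqE /= eq_xy eqxx.
Qed.

Lemma collapse_seq_key_below t :
  collapse_seq (simplex 'I_n) (indep_complex (key_below t)).
Proof.
elim: t => [|t IH].
  suff -> : indep_complex (key_below 0) = simplex 'I_n by apply: collapse_seq_refl.
  by apply/setP => eta; rewrite in_setT; apply/indep_complexP => x y; rewrite /key_below andbF.
have [/existsP[a /existsP[b /andP[lt_ab /eqP key_ab]]] | /existsPn no_key] :=
  boolP [exists a : 'I_n, exists b : 'I_n, (a < b) && (pair_key a b == t)].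
  subst t; apply: collapse_seq_rcons IH _.
  rewrite (eq_indep_complex (key_below_add_edge lt_ab)).
  apply: (elem_2collapse_add_edge _ _ _ (indep_common_nonnbr_key_below lt_ab)).
  - exact: key_below_irr.
  - exact: key_below_sym.
  - by rewrite /key_below ltnn andbF.
rewrite (eq_indep_complex (key_belowS_eq _)) // => a b lt_ab.
by move/existsPn/(_ b): (no_key a); rewrite lt_ab.
Qed.

End LexicographicEdges.

Theorem lemma5 (d : nat) :
  collapse_seq (simplex 'I_d.+1) (vertices_complex 'I_d.+1).
Proof.
rewrite -indep_complex_complete -(@eq_indep_complex _ (key_below (d.+1 * d.+1))).
  exact: collapse_seq_key_below.
by move=> x y; rewrite /key_below pair_key_lt_sq andbT.
Qed.
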